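(* Let $\mu$ be a partition of $k$. Then, as functions on Young diagrams, $\mathrm{Ko}^{(\alpha)}_\mu=\sum_{\nu\vdash k}\frac{L_{\nu,\mu}}{z_\nu}\,\mathrm{Ch}^{(\alpha)}_\nu .$ In particular $\mathrm{Ko}^{(\alpha)}_\mu$ is an $\alpha$-shifted symmetric function.
   Context: $J^{(\alpha)}_\lambda$ is the Jack symmetric function in Macdonald's $J$-normalization. Write $J^{(\alpha)}_\lambda=\sum_{\tau\vdash|\lambda|}\widehat K^{\lambda,(\alpha)}_\tau M_\tau$ (monomial basis) and $J^{(\alpha)}_\lambda=\sum_{\tau\vdash|\lambda|}\theta^{(\alpha)}_\tau(\lambda)\,\mathrm p_\tau$ (power-sum basis). The numbers $L_{\nu,\mu}$ are defined by $\mathrm p_\nu=\sum_{\mu\vdash k}L_{\nu,\mu}M_\mu$ for $\nu\vdash k$. For a partition $\mu$ with $m_i=m_i(\mu)$ parts equal to $i$, $z_\mu=\prod_i i^{m_i}m_i!$. For $\mu\vdash k$ and $|\lambda|=n$ ($\mu1^{n-k}$ is $\mu$ with $n-k$ parts $1$ appended): $\mathrm{Ko}^{(\alpha)}_\mu(\lambda)=\widehat K^{\lambda,(\alpha)}_{\mu1^{n-k}}/(n-k)!$ if $n\ge k$, $0$ otherwise; $\mathrm{Ch}^{(\alpha)}_\mu(\lambda)=\binom{n-k+m_1(\mu)}{m_1(\mu)}\,z_\mu\,\theta^{(\alpha)}_{\mu1^{n-k}}(\lambda)$ if $n\ge k$, $0$ otherwise. An $\alpha$-shifted symmetric function is a sequence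 $F=(F_N)_{N\ge1}$, $F_N\in\mathbb Q(\alpha)[x_1,\dots,x_N]$ symmetric in $x_1-1/\alpha,\dots,x_N-N/\alpha$, with $F_{N+1}(x_1,\dots,x_N,0)=F_N(x_1,\dots,x_N)$ and bounded degrees; it is viewed as a function on Young diagrams via $F(\lambda)=F_\ell(\lambda_1,\dots,\lambda_\ell)$ for $\lambda$ with $\ell$ rows. It is known that each $\mathrm{Ch}^{(\alpha)}_\nu$ is $\alpha$-shifted symmetric. *)

From HB Require Import structures.
From mathcomp Require Import all_boot all_order all_algebra all_fingroup.
From mathcomp Require Import fraction.
Set Implicit Arguments. Unset Strict Implicit. Unset Printing Implicit Defensive.
Import Order.TTheory GRing.Theory Num.Theory.
Local Open Scope ring_scope.

Definition Qa : fieldType := {fraction {poly rat}}.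
Definition alpha : Qa := tofrac ('X : {poly rat}).

Definition is_partition (s : seq nat) : bool :=
  sorted geq s && all (fun x => 0 < x)%N s.

(* All partitions of k (each listed once): every partition of k has at most
   k parts, each at most k, hence is obtained from some f : 'I_k -> 'I_k.+1
   by dropping zero entries. *)
Definition partitions (k : nat) : seq (seq nat) :=
  [seq s <- undup [seq [seq (val (f i)) | i <- enum 'I_k & (0 < val (f i))%N]
                   | f : {ffun 'I_k -> 'I_k.+1}]
     | is_partition s && (sumn s == k)].

Definition mult (i : nat) (mu : seq nat) : nat := count_mem i mu.

Definition zee (mu : seq nat) : nat :=
  \prod_(i <- undup mu) (i ^ mult i mu * (mult i mu)`!)%N.

Definition dominated (tau lam : seq nat) : bool :=
  [forall i : 'I_(size tau + size lam).+1,
     (sumn (take i tau) <= sumn (take i lam))%N].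

(* L_{nu,mu}: coefficient of m_mu in p_nu, i.e. the coefficient of
   x_1^{mu_1} ... x_l^{mu_l} in prod_i (sum_j x_j^{nu_i}). *)
Definition Lc (nu mu : seq nat) : nat :=
  #|[set f : {ffun 'I_(size nu) -> 'I_(size mu)} |
      [forall j : 'I_(size mu),
         (\sum_(i | f i == j) nth 0 nu i)%N == nth 0 mu j]]|.

Definition add_ones (mu : seq nat) (j : nat) : seq nat := mu ++ nseq j 1%N.

(* A family theta : lam -> tau -> Q(alpha) is read as
   J_lam = sum_{tau |- |lam|} theta lam tau * p_tau (power-sum expansion).
   Its monomial coefficients are then Khat lam tau = sum_nu theta lam nu L_{nu,tau}. *)
Definition Khat (theta : seq nat -> seq nat -> Qa) (lam tau : seq nat) : Qa :=
  \sum_(nu <- partitions (sumn lam)) theta lam nu * (Lc nu tau)%:R.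

(* Characterization of Jack symmetric functions in Macdonald's J-normalization:
   (i) J_lam = sum_{tau <= lam} Khat m_tau (triangularity in dominance order),
   (ii) <J_lam, J_rho>_alpha = 0 for lam <> rho, where
        <p_nu, p_rho>_alpha = delta_{nu rho} z_nu alpha^{l(nu)},
   (iii) the coefficient of m_{1^n} in J_lam is n!.
   These determine J_lam uniquely (Macdonald, Ch. VI, Sect. 10). *)
Definition IsJack (theta : seq nat -> seq nat -> Qa) : Prop :=
  forall lam : seq nat, is_partition lam ->
    let n := sumn lam in
    [/\ forall tau, tau \in partitions n -> ~~ dominated tau lam ->
          Khat theta lam tau = 0,
        Khat theta lam (nseq n 1%N) = (n`!)%:R
      & forall rho, is_partition rho -> sumn rho = n -> rho != lam ->
          \sum_(nu <- partitions n)
             theta lam nu * theta rho nu * (zee nu)%:R * alpha ^+ size nu = 0].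

Definition Ko (theta : seq nat -> seq nat -> Qa) (mu lam : seq nat) : Qa :=
  let n := sumn lam in let k := sumn mu in
  if (k <= n)%N then Khat theta lam (add_ones mu (n - k)) / ((n - k)`!)%:R
  else 0.

Definition Ch (theta : seq nat -> seq nat -> Qa) (mu lam : seq nat) : Qa :=
  let n := sumn lam in let k := sumn mu in
  if (k <= n)%N then
    ('C(n - k + mult 1 mu, mult 1 mu))%:R * (zee mu)%:R
      * theta lam (add_ones mu (n - k))
  else 0.

Definition polyfun_deg (N d : nat) (f : seq Qa -> Qa) : Prop :=
  exists terms : seq (Qa * seq nat),
    (forall t, t \in terms -> (sumn t.2 <= d)%N) /\
    forall x : seq Qa, size x = N ->
      f x = \sum_(t <- terms) t.1 * \prod_(i < N) (nth 0 x i) ^+ (nth 0%N t.2 i).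

(* y_i = x_i - i/alpha (1-based i); permuting the y's. *)
Definition shift_perm (N : nat) (s : 'S_N) (x : seq Qa) : seq Qa :=
  [seq nth 0 x (s i) - ((s i).+1)%:R / alpha + (i.+1)%:R / alpha
     | i <- enum 'I_N].

(* G (a function on Young diagrams) is alpha-shifted symmetric: there is a
   sequence (F_N)_{N>=1} of polynomial functions of bounded degree, each
   symmetric in x_1 - 1/alpha, ..., x_N - N/alpha, stable under
   F_{N+1}(x,0) = F_N(x), with G(lam) = F_l(lam_1..lam_l) (l = #rows; we
   evaluate at F_{l+1}(lam,0), which equals it by stability and also covers
   the empty diagram). *)
Definition shifted_symmetric (G : seq nat -> Qa) : Prop :=
  exists F : nat -> seq Qa -> Qa,
    [/\ exists d, forall N, (0 < N)%N -> polyfun_deg N d (F N),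
        forall N (s : 'S_N) (x : seq Qa), (0 < N)%N -> size x = N ->
          F N (shift_perm s x) = F N x,
        forall N (x : seq Qa), (0 < N)%N -> size x = N ->
          F N.+1 (rcons x 0) = F N x
      & forall lam, is_partition lam ->
          G lam = F (size lam).+1 (rcons [seq (i%:R : Qa) | i <- lam] 0)].

From HB Require Import structures.
From mathcomp Require Import all_boot all_order all_algebra all_fingroup.
From mathcomp Require Import fraction.
From mathcomp Require Import zify ring.
Import Order.TTheory GRing.Theory Num.Theory.
Set Implicit Arguments. Unset Strict Implicit. Unset Printing Implicit Defensive.

(* In the power-sum expansion of J_lam, the monomial coefficient of
   tau = mu 1^j is Khat lam tau = sum_rho theta lam rho L_{rho,tau}.  A filling
   of the bins of tau by the parts of rho must put a part 1 into each of the j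
   unit bins, so only rho = nu 1^j contributes, and then
   L_{nu 1^j, mu 1^j} = (m_1(nu) + j)_j L_{nu,mu}
                      = C(j + m_1(nu), m_1(nu)) j! L_{nu,mu}.
   Dividing by j! turns Ko_mu into the stated combination of the Ch_nu, and
   shifted symmetry survives finite linear combinations. *)

Fixpoint fillings (m : nat) (nu t : seq nat) : nat :=
  match nu with
  | [::] => all (fun j => nth 0 t j == 0) (iota 0 m)
  | a :: nu' => \sum_(0 <= j < m)
       (a <= nth 0 t j) * fillings m nu' (set_nth 0 t j (nth 0 t j - a))
  end.

Lemma fillings_nil m t :
  fillings m [::] t = all (fun j => nth 0 t j == 0) (iota 0 m).
Proof. by []. Qed.

Lemma fillings_cons m a nu t : fillings m (a :: nu) t = \sum_(0 <= j < m)
  (a <= nth 0 t j) * fillings m nu (set_nth 0 t j (nth 0 t j - a)).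
Proof. by []. Qed.

Lemma eq_fillings m nu t t' : (forall i, i < m -> nth 0 t i = nth 0 t' i) ->
  fillings m nu t = fillings m nu t'.
Proof.
elim: nu t t' => [|a nu IH] t t' eq_tt'.
  rewrite !fillings_nil; congr (nat_of_bool _); apply: eq_in_all => i.
  by rewrite mem_iota add0n => /andP[_ /eq_tt' ->].
rewrite !fillings_cons; apply: eq_big_nat => j /andP[_ jm]; rewrite eq_tt' //.
by congr (_ * _); apply: IH => i im; rewrite !nth_set_nth /= eq_tt'.
Qed.

Lemma fillings_swap m a b nu t :
  fillings m [:: a, b & nu] t = fillings m [:: b, a & nu] t.
Proof.
rewrite !fillings_cons.
under eq_bigr => i _ do rewrite fillings_cons big_distrr.
under [RHS]eq_bigr => i _ do rewrite fillings_cons big_distrr.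
rewrite [LHS]exchange_big_nat; apply: eq_big_nat => i _; apply: eq_big_nat => j _.
rewrite !nth_set_nth [in LHS]set_set_nth /=.
have [->|nji] := eqVneq j i; last by rewrite mulnCA.
rewrite set_set_nth eqxx subnAC !mulnA !mulnb; congr (nat_of_bool _ * _).
by apply/andP/andP => -[]; split; lia.
Qed.

Lemma fillings_perm m nu1 nu2 t :
  perm_eq nu1 nu2 -> fillings m nu1 t = fillings m nu2 t.
Proof.
elim: nu1 nu2 t => [|a nu1 IH] nu2 t; first by move=> /perm_size; case: nu2.
move=> perm12; have a_nu2 : a \in nu2 by rewrite -(perm_mem perm12) mem_head.
have to_front : forall s t', a \in s -> fillings m s t' = fillings m (a :: rem a s) t'.
  elim=> [//|b s IHs] t'; rewrite inE; have [->|nba] := eqVneq b a.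
    by rewrite /= eqxx.
  move=> a_s; rewrite [rem _ _]/= (negbTE nba) -fillings_swap !fillings_cons.
  by apply: eq_bigr => i _; rewrite (IHs _ a_s).
rewrite (to_front _ _ a_nu2) !fillings_cons; apply: eq_bigr => i _.
congr (_ * _); apply: IH.
by rewrite -(perm_cons a); apply: perm_trans perm12 (perm_to_rem a_nu2).
Qed.

Definition pos_parts (s : seq nat) := all (fun x => 0 < x) s.

Lemma fillings_empty_last_bin m nu t : pos_parts nu ->
  fillings m.+1 nu (set_nth 0 t m 0) = fillings m nu t.
Proof.
elim: nu t => [|a nu IH] t.
  move=> _; rewrite !fillings_nil -addn1 iotaD all_cat add0n /= nth_set_nth /= eqxx !andbT.
  congr (nat_of_bool _); apply: eq_in_all => i; rewrite mem_iota add0n => /andP[_ im].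
  by rewrite nth_set_nth /= (ltn_eqF im).
case/andP=> a_gt0 nu_pos; rewrite !fillings_cons big_nat_recr //= nth_set_nth /= eqxx.
rewrite leqn0 (gtn_eqF a_gt0) mul0n addn0; apply: eq_big_nat => j /andP[_ jm].
by rewrite nth_set_nth /= (ltn_eqF jm) set_set_nth (gtn_eqF jm) IH.
Qed.

(* A bin of capacity 1 must receive one of the parts equal to 1. *)
Lemma fillings_unit_last_bin m nu t : pos_parts nu -> nth 0 t m = 1 ->
  fillings m.+1 nu t = count_mem 1 nu * fillings m (rem 1 nu) t.
Proof.
elim: nu t => [|a nu IH] t.
  by move=> _ tm1; rewrite fillings_nil -addn1 iotaD all_cat add0n /= tm1 andbF.
case/andP=> a_gt0 nu_pos tm1; rewrite fillings_cons big_nat_recr //= tm1.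
under eq_big_nat => j /andP[_ jm].
  rewrite (IH _ nu_pos); last by rewrite nth_set_nth /= (gtn_eqF jm).
  rewrite mulnCA; over.
rewrite -big_distrr -fillings_cons.
have [a1|an1] := eqVneq a 1; last first.
  by rewrite (_ : (a <= 1) = false) ?mul0n ?addn0 //; lia.
rewrite a1 subnn leqnn mul1n fillings_empty_last_bin // add1n mulSn addnC.
have [->//|c_gt0] := posnP (count_mem 1 nu).
by rewrite -(fillings_perm _ _ (perm_to_rem _)) // -has_pred1 has_count.
Qed.

Lemma fillings_unit_bins j m nu t : pos_parts nu ->
    (forall i, m <= i < m + j -> nth 0 t i = 1) ->
  fillings (m + j) (nu ++ nseq j 1) t = (count_mem 1 nu + j) ^_ j * fillings m nu t.
Proof.
elim: j => [|j IH] nu_pos t_unit; first by rewrite addn0 cats0 ffactn0 mul1n.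
have perm1 : perm_eq (nu ++ nseq j.+1 1) (1 :: nu ++ nseq j 1).
  by rewrite -[nseq j.+1 1]/([:: 1] ++ nseq j 1) perm_catCA.
rewrite (fillings_perm _ _ perm1) addnS fillings_unit_last_bin; first last.
- by apply: t_unit; lia.
- by rewrite /pos_parts /= all_cat [all _ nu]nu_pos; apply/allP => x /nseqP[->].
rewrite /= IH //; last by move=> i ?; apply: t_unit; lia.
by rewrite count_cat count_nseq /= mul1n addnS ffactSS; ring.
Qed.

Lemma fillings_unit_bins_eq0 j m nu t : pos_parts nu ->
    (forall i, m <= i < m + j -> nth 0 t i = 1) ->
  count_mem 1 nu < j -> fillings (m + j) nu t = 0.
Proof.
elim: j nu => [//|j IH] nu nu_pos t_unit few_ones.
rewrite addnS fillings_unit_last_bin //; last by apply: t_unit; lia.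
have [->//|c_gt0] := posnP (count_mem 1 nu).
have perm1 := perm_to_rem (_ : 1 \in nu); rewrite -has_pred1 has_count in perm1.
rewrite IH ?muln0 //.
- by move: nu_pos; rewrite /pos_parts (perm_all _ (perm1 c_gt0)) => /andP[].
- by move=> i ?; apply: t_unit; lia.
by move: few_ones; rewrite (seq.permP (perm1 c_gt0)) /= add1n ltnS.
Qed.

Definition ffun_cons (T : finType) n (x : T) (g : {ffun 'I_n -> T}) : {ffun 'I_n.+1 -> T} :=
  [ffun i => if unlift ord0 i is Some i' then g i' else x].

Lemma big_ffun_cons (R : Type) (idx : R) (op : Monoid.com_law idx) (T : finType) n
    (F : {ffun 'I_n.+1 -> T} -> R) :
  \big[op/idx]_f F f =
    \big[op/idx]_(x : T) \big[op/idx]_(g : {ffun 'I_n -> T}) F (ffun_cons x g).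
Proof.
rewrite (pair_bigA _ (fun x g => F (ffun_cons x g))) /=.
rewrite (reindex (fun p : T * {ffun 'I_n -> T} => ffun_cons p.1 p.2)) //.
exists (fun f : {ffun 'I_n.+1 -> T} => (f ord0, [ffun i : 'I_n => f (lift ord0 i)])) => [[x g] _|f _] /=.
  by congr pair; [rewrite ffunE unlift_none | apply/ffunP => i; rewrite !ffunE liftK].
by apply/ffunP => i; rewrite !ffunE; case: unliftP => [j ->|->]; rewrite ?ffunE.
Qed.

Lemma fillingsE m nu t :
  fillings m nu t = \sum_(f : {ffun 'I_(size nu) -> 'I_m})
     [forall j : 'I_m, (\sum_(i | f i == j) nth 0 nu i) == nth 0 t j].
Proof.
elim: nu t => [|a nu IH] t.
  under eq_bigr => f _ do under eq_forallb => j do rewrite big_ord0.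
  rewrite sum_nat_const card_ffun !card_ord expn0 mul1n fillings_nil.
  congr (nat_of_bool _); apply/allP/forallP => [t0 j|t0 i].
    by rewrite eq_sym t0 // mem_iota /=.
  by rewrite mem_iota /= => im; have := t0 (Ordinal im); rewrite eq_sym.
rewrite fillings_cons big_mkord big_ffun_cons; apply: eq_bigr => x _.
rewrite IH big_distrr /=; apply: eq_bigr => g _; rewrite mulnb; congr (nat_of_bool _).
have fiber_sum j : \sum_(i < (size nu).+1 | ffun_cons x g i == j) nth 0 (a :: nu) i
    = (x == j) * a + \sum_(i < size nu | g i == j) nth 0 nu i.
  rewrite big_mkcond big_ord_recl [in RHS]big_mkcond /= ffunE unlift_none mulnbl.
  by congr (_ + _); apply: eq_bigr => i _; rewrite ffunE liftK.
apply/andP/forallP => [[a_le fill] j|fill].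
  move/forallP: fill => /(_ j); rewrite fiber_sum nth_set_nth /=.
  have [<-|nxj] := eqVneq x j; first by rewrite eqxx mul1n => /eqP ->; rewrite subnKC.
  by rewrite (_ : (val j == val x) = false) //; apply: contraNF nxj => /eqP/val_inj ->.
have := fill x; rewrite fiber_sum eqxx mul1n => /eqP fill_x.
split; first by rewrite -fill_x leq_addr.
apply/forallP => j; rewrite nth_set_nth /=.
have [/val_inj ->|njx] := eqVneq (val j) (val x); first by rewrite -fill_x addKn.
have := fill j; rewrite fiber_sum (_ : (x == j) = false) //.
by apply: contraNF njx => /eqP ->.
Qed.

Lemma Lc_fillings nu mu : Lc nu mu = fillings (size mu) nu mu.
Proof.
by rewrite /Lc fillingsE -sum1dep_card big_mkcond; apply: eq_bigr => f _; case: ifP.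
Qed.

Lemma nth_le_sumn (s : seq nat) i : nth 0 s i <= sumn s.
Proof.
elim: s i => [|x s IH] [|i] //=; first exact: leq_addr.
exact: leq_trans (IH i) (leq_addl _ _).
Qed.

Lemma size_le_sumn s : pos_parts s -> size s <= sumn s.
Proof. by elim: s => [//|x s IH] /andP[x_gt0 /IH]; rewrite /= -add1n; apply: leq_add. Qed.

Lemma mem_partitions n s : (s \in partitions n) = is_partition s && (sumn s == n).
Proof.
rewrite /partitions mem_filter andbC; apply/andP/idP => [[] //|part_s].
split=> //; rewrite mem_undup; apply/mapP.
case/andP: part_s => /andP[_ s_pos] /eqP sum_s.
have s_bound i : nth 0 s i < n.+1 by rewrite ltnS -sum_s nth_le_sumn.
exists [ffun i : 'I_n => inord (nth 0 s i) : 'I_n.+1]; first by rewrite mem_enum.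
under eq_filter => i do rewrite ffunE /= inordK //.
under eq_map => i do rewrite ffunE /= inordK //.
rewrite (_ : [seq nth 0 s i | i : 'I_n <- enum 'I_n & 0 < nth 0 s i] =
    [seq nth 0 s i | i <- [seq i <- map val (enum 'I_n) | 0 < nth 0 s i]]);
  last by rewrite filter_map -map_comp.
rewrite val_enum_ord.
have size_s : size s <= n by rewrite -sum_s size_le_sumn.
rewrite -(subnKC size_s) iotaD filter_cat map_cat.
rewrite (@eq_in_filter _ _ pred0 (iota (0 + size s) _)) ?filter_pred0 ?cats0; last first.
  by move=> x; rewrite mem_iota add0n => /andP[x_ge _]; rewrite nth_default.
rewrite (_ : filter _ _ = iota 0 (size s)); first exact/esym/(mkseq_nth 0 s).
apply/all_filterP/allP => x; rewrite mem_iota add0n => x_lt.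
by move/allP: s_pos; apply; rewrite mem_nth.
Qed.

Lemma uniq_partitions n : uniq (partitions n).
Proof. by rewrite filter_uniq // undup_uniq. Qed.

Lemma path_geq_ones x j : 0 < x -> path geq x (nseq j 1).
Proof. by elim: j x => [//|j IH] x x_gt0 /=; rewrite x_gt0 IH. Qed.

Lemma is_partition_add_ones nu j : is_partition nu -> is_partition (add_ones nu j).
Proof.
case/andP=> nu_sorted nu_pos; apply/andP; split; last first.
  by rewrite all_cat nu_pos; apply/allP => x /nseqP[->].
case: nu nu_sorted nu_pos => [|x nu] nu_sorted nu_pos /=.
  by case: j => //= j; rewrite path_geq_ones.
rewrite cat_path; apply/andP; split=> //; apply: path_geq_ones.
by move/allP: nu_pos; apply; rewrite mem_last.
Qed.

Lemma add_ones_inj j : injective (add_ones^~ j).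
Proof.
rewrite /add_ones => a b eq_ab; have size_ab : size a = size b.
  by move/(congr1 size): eq_ab; rewrite !size_cat => /addIn.
by rewrite -[a](take_size_cat (nseq j 1) (erefl _)) eq_ab take_size_cat.
Qed.

Lemma partition_split_ones rho j : is_partition rho -> j <= count_mem 1 rho ->
  exists2 nu, is_partition nu & rho = add_ones nu j.
Proof.
elim: rho j => [|x rho IH] j; first by move=> _; rewrite leqn0 => /eqP->; exists [::].
case/andP=> sorted_xrho /andP[x_gt0 rho_pos].
have rho_sorted : sorted geq rho := path_sorted sorted_xrho.
have [x1|xn1] := eqVneq x 1.
  have -> : rho = nseq (size rho) 1.
    apply/all_pred1P/allP => y y_rho.
    have := allP (order_path_min (rev_trans leq_trans) sorted_xrho) y y_rho.
    by move/allP: rho_pos => /(_ y y_rho); rewrite x1 /= eqn_leq => -> ->.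
  rewrite x1 /= count_nseq /= mul1n add1n => j_le.
  exists (nseq ((size rho).+1 - j) 1); last by rewrite /add_ones -nseqD subnK.
  apply/andP; split; last by apply/allP => y /nseqP[->].
  by case: (_ - _) => //= i; rewrite path_geq_ones.
rewrite /= (negbTE xn1) add0n => j_le.
have [nu nu_part rho_eq] := IH j (introT andP (conj rho_sorted rho_pos)) j_le.
exists (x :: nu); last by rewrite rho_eq.
case/andP: nu_part => _ nu_pos; apply/andP; split; last by rewrite /= x_gt0.
by move: sorted_xrho; rewrite rho_eq /= cat_path => /andP[].
Qed.

Lemma perm_partitions_add_ones k j :
  perm_eq [seq rho <- partitions (k + j) | j <= count_mem 1 rho]
          [seq add_ones nu j | nu <- partitions k].
Proof.
apply: uniq_perm.
- by rewrite filter_uniq // uniq_partitions.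
- by rewrite (map_inj_uniq (@add_ones_inj j)) uniq_partitions.
move=> rho; rewrite mem_filter mem_partitions; apply/idP/mapP.
  case/andP=> j_le /andP[rho_part /eqP sum_rho].
  have [nu nu_part rho_eq] := partition_split_ones rho_part j_le.
  exists nu => //; rewrite mem_partitions nu_part /=.
  by move: sum_rho; rewrite rho_eq /add_ones sumn_cat sumn_nseq mul1n => /addIn ->.
case=> nu; rewrite mem_partitions => /andP[nu_part /eqP sum_nu] ->.
rewrite is_partition_add_ones //= /add_ones sumn_cat sumn_nseq sum_nu mul1n eqxx andbT.
by rewrite count_cat count_nseq /= mul1n leq_addl.
Qed.

Lemma Lc_add_ones nu mu j : is_partition nu ->
  Lc (add_ones nu j) (add_ones mu j) = (count_mem 1 nu + j) ^_ j * Lc nu mu.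
Proof.
case/andP=> _ nu_pos; rewrite !Lc_fillings size_cat size_nseq fillings_unit_bins //.
  by congr (_ * _); apply: eq_fillings => i i_lt; rewrite nth_cat i_lt.
by move=> i /andP[i_ge i_lt]; rewrite nth_cat ltnNge i_ge /= nth_nseq; case: ifP; lia.
Qed.

Lemma Lc_add_ones_eq0 rho mu j : is_partition rho -> count_mem 1 rho < j ->
  Lc rho (add_ones mu j) = 0.
Proof.
case/andP=> _ rho_pos few_ones.
rewrite Lc_fillings size_cat size_nseq fillings_unit_bins_eq0 //.
by move=> i /andP[i_ge i_lt]; rewrite nth_cat ltnNge i_ge /= nth_nseq; case: ifP; lia.
Qed.

Lemma zee_gt0 nu : is_partition nu -> 0 < zee nu.
Proof.
case/andP=> _ /allP nu_pos; rewrite /zee big_seq; apply: prodn_cond_gt0 => i.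
by rewrite mem_undup => /nu_pos i_gt0; rewrite muln_gt0 expn_gt0 i_gt0 fact_gt0.
Qed.

Local Open Scope ring_scope.

Lemma Qa_natr_eq0 n : ((n%:R : Qa) == 0) = (n == 0)%N.
Proof.
have -> : (n%:R : Qa) = tofrac (n%:R : {poly rat}) by rewrite rmorph_nat.
by rewrite tofrac_eq0 -polyC_natr polyC_eq0 pnatr_eq0.
Qed.

Lemma Khat_add_ones theta lam mu k j : sumn lam = (k + j)%N ->
  Khat theta lam (add_ones mu j) = \sum_(nu <- partitions k)
    theta lam (add_ones nu j) * ((count_mem 1 nu + j) ^_ j * Lc nu mu)%:R.
Proof.
move=> sum_lam; rewrite /Khat sum_lam (bigID (fun rho => j <= count_mem 1 rho)%N) /=.
rewrite [X in _ + X]big1_seq ?addr0; last first.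
  move=> rho /andP[few_ones]; rewrite mem_partitions => /andP[rho_part _].
  by rewrite Lc_add_ones_eq0 ?mulr0 // ltnNge.
rewrite -big_filter (perm_big _ (perm_partitions_add_ones k j)) big_map.
apply: eq_big_seq => nu; rewrite mem_partitions => /andP[nu_part _].
by rewrite Lc_add_ones.
Qed.

Lemma Ko_Ch_expansion theta k mu lam : sumn mu = k ->
  Ko theta mu lam =
    \sum_(nu <- partitions k) (Lc nu mu)%:R / (zee nu)%:R * Ch theta nu lam.
Proof.
rewrite /Ko /Ch => ->; set n := sumn lam.
under [RHS]eq_big_seq => nu.
  rewrite mem_partitions => /andP[_ /eqP ->]; over.
have [k_le|k_gt] := leqP k n; last by rewrite big1 // => nu _; rewrite mulr0.
set j := (n - k)%N; rewrite (Khat_add_ones _ _ (esym (subnKC k_le))) mulr_suml.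
apply: eq_big_seq => nu; rewrite mem_partitions => /andP[nu_part _].
have -> : ((count_mem 1 nu + j) ^_ j = 'C(j + mult 1 nu, mult 1 nu) * j`!)%N.
  rewrite /mult [X in 'C(_, X)](esym (addKn j (count_mem 1 nu))) bin_sub ?leq_addr //.
  by rewrite bin_ffact addnC.
have zee_neq0 : (zee nu)%:R != 0 :> Qa by rewrite Qa_natr_eq0 -lt0n zee_gt0.
have fact_neq0 : (j`!)%:R != 0 :> Qa by rewrite Qa_natr_eq0 -lt0n fact_gt0.
rewrite !natrM [_ * _%:R * _]mulrAC [theta _ _ * _]mulrA mulfK //.
rewrite [_ * (zee nu)%:R]mulrC -[_ * _ * theta _ _]mulrA -mulrA mulKf //.
by rewrite mulrCA [RHS]mulrCA [theta _ _ * _]mulrC.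
Qed.

Lemma shifted_symmetric_ext (G H : seq nat -> Qa) :
  (forall lam, is_partition lam -> G lam = H lam) ->
  shifted_symmetric H -> shifted_symmetric G.
Proof.
move=> eq_GH [F [deg_F sym_F stable_F eval_F]]; exists F; split=> // lam lam_part.
by rewrite eq_GH // eval_F.
Qed.

Lemma shifted_symmetric0 : shifted_symmetric (fun _ => 0).
Proof.
exists (fun _ _ => 0); split=> //.
by exists 0%N => N _; exists [::]; split=> // x _; rewrite big_nil.
Qed.

Lemma shifted_symmetricDZ (G1 G2 : seq nat -> Qa) c :
  shifted_symmetric G1 -> shifted_symmetric G2 ->
  shifted_symmetric (fun lam => G1 lam + c * G2 lam).
Proof.
move=> [F1 [[d1 deg1] sym1 stable1 eval1]] [F2 [[d2 deg2] sym2 stable2 eval2]].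
exists (fun N x => F1 N x + c * F2 N x); split.
- exists (maxn d1 d2) => N N_gt0.
  have [terms1 [bound1 expand1]] := deg1 N N_gt0.
  have [terms2 [bound2 expand2]] := deg2 N N_gt0.
  exists (terms1 ++ [seq (c * t.1, t.2) | t <- terms2]); split.
    move=> t; rewrite mem_cat => /orP[/bound1|/mapP[u /bound2 u_bound ->]].
      by move/leq_trans; apply; rewrite leq_maxl.
    by apply: leq_trans u_bound _; rewrite leq_maxr.
  move=> x size_x; rewrite big_cat big_map /= expand1 // expand2 // mulr_sumr.
  by congr (_ + _); apply: eq_bigr => t _; rewrite mulrA.
- by move=> N s x N_gt0 size_x; rewrite sym1 // sym2.
- by move=> N x N_gt0 size_x; rewrite stable1 // stable2.
- by move=> lam lam_part; rewrite eval1 // eval2.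
Qed.

Lemma shifted_symmetric_sum (I : eqType) (s : seq I) (c : I -> Qa)
    (G : I -> seq nat -> Qa) :
  (forall i, i \in s -> shifted_symmetric (G i)) ->
  shifted_symmetric (fun lam => \sum_(i <- s) c i * G i lam).
Proof.
elim: s => [|i s IH] ss_G.
  by apply: shifted_symmetric_ext shifted_symmetric0 => lam _; rewrite big_nil.
apply: (@shifted_symmetric_ext _ (fun lam => \sum_(i <- s) c i * G i lam + c i * G i lam)).
  by move=> lam _; rewrite big_cons addrC.
apply: shifted_symmetricDZ; last by apply: ss_G; rewrite mem_head.
by apply: IH => i' i'_s; apply: ss_G; rewrite inE i'_s orbT.
Qed.

Unset Implicit Arguments.

Theorem proposition2p3 (theta : seq nat -> seq nat -> Qa) (Hjack : IsJack theta)
    (k : nat) (mu : seq nat) (Hmu : is_partition mu) (Hk : sumn mu = k) :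
  (forall lam : seq nat, is_partition lam ->
     Ko theta mu lam =
       \sum_(nu <- partitions k) (Lc nu mu)%:R / (zee nu)%:R * Ch theta nu lam)
  /\ ((forall nu : seq nat, is_partition nu -> shifted_symmetric (Ch theta nu)) ->
      shifted_symmetric (Ko theta mu)).
Proof.
have Ko_expansion lam : Ko theta mu lam =
    \sum_(nu <- partitions k) (Lc nu mu)%:R / (zee nu)%:R * Ch theta nu lam.
  exact: Ko_Ch_expansion.
split=> [lam _|ss_Ch]; first exact: Ko_expansion.
apply: shifted_symmetric_ext (fun lam _ => Ko_expansion lam) _.
apply: shifted_symmetric_sum => nu; rewrite mem_partitions => /andP[nu_part _].
exact: ss_Ch.
Qed.
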